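(* Let $K$ be a number field, $L/K$ a (possibly infinite) Galois extension in which every element of $\operatorname{Gal}(L/K)$ has finite order, and $E/K$ an elliptic curve. Let $q$ be an odd prime power with $E(L)[q]\cong\mathbb{Z}/q\mathbb{Z}$. For $\sigma\in\operatorname{Gal}(L/K)$ let $\operatorname{ord}(\sigma)$ be its order, and let $\phi$ be Euler's totient function. (1) If $\gcd(\phi(q),\operatorname{ord}(\sigma))=1$ for all $\sigma\in\operatorname{Gal}(L/K)$, then $E(L)[q]=E(K)[q]$. (2) If $\gcd(\phi(q),\operatorname{ord}(\sigma))\le 2$ for all $\sigma\in\operatorname{Gal}(L/K)$, then there is $d\in K$ with $\sqrt d\in L$ such that $E(L)[q]\cong E_d(L)[q]=E_d(K)[q]$.
   Context: $E(F)[q]$ denotes the $q$-torsion points of $E$ defined over $F$ (points killed by $q$). $E_d$ denotes the quadratic twist of $E$ by $d$. *)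

(* Everything (number field K, Galois extension L, curve
   points) lives inside algC, the algebraic closure of Q. *)
From mathcomp Require Import all_boot all_order all_algebra all_field.
Set Implicit Arguments. Unset Strict Implicit. Unset Printing Implicit Defensive.
Import GRing.Theory Num.Theory.
Local Open Scope ring_scope.

Definition is_subfield (F : algC -> Prop) : Prop :=
  F 0 /\ F 1 /\
  (forall x y, F x -> F y -> F (x + y)) /\
  (forall x, F x -> F (- x)) /\
  (forall x y, F x -> F y -> F (x * y)) /\
  (forall x, F x -> F x^-1).

Definition number_field (K : algC -> Prop) : Prop :=
  is_subfield K /\
  exists (n : nat) (s : 'I_n -> algC), forall x, K x <->
     exists c : 'I_n -> rat, x = \sum_(i < n) ratr (c i) * s i.

(* L/K is a (possibly infinite) Galois extension inside algC = Qbar: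
   K <= L are subfields and L is stable under every automorphism of Qbar
   fixing K (normality; algebraicity and separability are automatic). *)
Definition galois_ext (K L : algC -> Prop) : Prop :=
  [/\ is_subfield K, is_subfield L, (forall x, K x -> L x) &
      forall tau : {rmorphism algC -> algC},
        (forall x, K x -> tau x = x) -> forall x, L x -> L (tau x)].

(* sigma (a function on algC, considered only on L) is an element of
   Gal(L/K): a field automorphism of L fixing K pointwise. *)
Definition in_gal (K L : algC -> Prop) (sigma : algC -> algC) : Prop :=
  (forall x, L x -> L (sigma x)) /\
  (forall y, L y -> exists2 x, L x & sigma x = y) /\
  (forall x y, L x -> L y -> sigma (x + y) = sigma x + sigma y) /\
  (forall x y, L x -> L y -> sigma (x * y) = sigma x * sigma y) /\
  sigma 1 = 1 /\
  (forall x, K x -> sigma x = x).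

Definition gal_order (L : algC -> Prop) (sigma : algC -> algC) (n : nat) : Prop :=
  [/\ (0 < n)%N, (forall x, L x -> iter n sigma x = x) &
      forall m, (0 < m < n)%N -> exists2 x, L x & iter m sigma x <> x].

Definition odd_prime_power (q : nat) : Prop :=
  exists p k, [/\ prime p, odd p, (0 < k)%N & q = (p ^ k)%N].

(* Elliptic curves in short Weierstrass form y^2 = x^3 + a x + b
   (char 0, so every elliptic curve over K has such a model). *)
Record ecurve := ECurve { ec_a : algC; ec_b : algC }.

Definition elliptic_over (K : algC -> Prop) (E : ecurve) : Prop :=
  [/\ K (ec_a E), K (ec_b E) & 4 * ec_a E ^+ 3 + 27 * ec_b E ^+ 2 != 0].

(* Projective points: None is the point at infinity O. *)
Definition point := option (algC * algC).

Definition on_curve (E : ecurve) (P : point) : Prop :=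
  match P with
  | None => True
  | Some (x, y) => y ^+ 2 = x ^+ 3 + ec_a E * x + ec_b E
  end.

Definition ec_add (E : ecurve) (P Q : point) : point :=
  match P, Q with
  | None, _ => Q
  | _, None => P
  | Some (x1, y1), Some (x2, y2) =>
      if x1 == x2 then
        if y1 == - y2 then None
        else let l := (3 * x1 ^+ 2 + ec_a E) / (2 * y1) in
             let x3 := l ^+ 2 - x1 - x2 in
             Some (x3, l * (x1 - x3) - y1)
      else let l := (y2 - y1) / (x2 - x1) in
           let x3 := l ^+ 2 - x1 - x2 in
           Some (x3, l * (x1 - x3) - y1)
  end.

Definition ec_mul (E : ecurve) (n : nat) (P : point) : point :=
  iter n (ec_add E P) None.

(* Quadratic twist E_d : y^2 = x^3 + d^2 a x + d^3 b  (~ d y^2 = x^3+ax+b). *)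
Definition twist (E : ecurve) (d : algC) : ecurve :=
  ECurve (d ^+ 2 * ec_a E) (d ^+ 3 * ec_b E).

Definition pt_over (F : algC -> Prop) (P : point) : Prop :=
  match P with None => True | Some (x, y) => F x /\ F y end.

Definition tors (E : ecurve) (F : algC -> Prop) (q : nat) (P : point) : Prop :=
  [/\ on_curve E P, pt_over F P & ec_mul E q P = None].

Definition iso_Zq (E : ecurve) (G : point -> Prop) (q : nat) : Prop :=
  exists f : 'Z_q -> point,
    [/\ injective f, (forall P, G P <-> exists i, f i = P) &
        forall i j, f (i + j) = ec_add E (f i) (f j)].

Definition group_iso (E1 : ecurve) (G1 : point -> Prop)
    (E2 : ecurve) (G2 : point -> Prop) : Prop :=
  exists h : point -> point,
    [/\ (forall P, G1 P -> G2 (h P)),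
        (forall P Q, G1 P -> G1 Q -> h P = h Q -> P = Q),
        (forall R, G2 R -> exists2 P, G1 P & h P = R) &
        (forall P Q, G1 P -> G1 Q -> h (ec_add E1 P Q) = ec_add E2 (h P) (h Q))].

(* Every automorphism nu of algC fixing K stabilises L and, since it commutes
   with the chord-tangent law, acts on E(L)[q] ~ Z/q as multiplication by some
   k; as k is a unit killed by ord(nu|L) and by phi(q), k^gcd(phi(q), ord) = 1.
   In case (1) k = 1, so torsion points are fixed by all such nu and hence
   K-rational, K being the fixed field of its algC-automorphisms. In case (2)
   k^2 = 1, hence k = +-1 because q is an odd prime power: nu fixes or negates
   every torsion point, by the same sign it applies to the y-coordinate c of a
   generator. The isomorphism (x, y) |-> (c^2 x, c^3 y) onto the twist by
   d = c^2 cancels that sign, so E_d(L)[q] is fixed by every nu. *)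
From HB Require Import structures.
From mathcomp Require Import all_boot all_order all_algebra all_field all_fingroup all_solvable.
From mathcomp Require Import zify ring.
From Stdlib Require Import Classical.
Set Implicit Arguments. Unset Strict Implicit. Unset Printing Implicit Defensive.
Import GRing.Theory Num.Theory FinRing.Theory.
Local Open Scope ring_scope.

Lemma splitting_field_aut_moves (F : splittingFieldType rat) (K : {subfield F}) x :
  x \notin K -> exists phi : {rmorphism F -> F},
    (forall y, y \in K -> phi y = y) /\ phi x != x.
Proof.
move=> Kx.
have galK : galois K {:F}.
  apply/and3P; split; [exact: subvf | | exact: normalFieldf].
  apply/separableP=> y _; apply: pcharf0_separable => p.
  by rewrite (pchar_lalg F) pchar_num.
have : x \notin fixedField ('Gal({:F} / K))%g by rewrite (galois_fixedField galK).
case: (pickP [pred g | (g \in 'Gal({:F} / K)%g) && (g x != x)]) => [g /andP[Gg gx] _ | fixg].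
  exists (gal_repr g); split=> // y Ky.
  exact: (fixed_gal (subvf K) Gg Ky).
case/negP; apply/(fixedFieldP (memvf x)) => g Gg.
by apply/eqP; have := fixg g; rewrite /= Gg /= => /negbFE.
Qed.

Lemma algC_splitting_field_containing (S : seq algC) :
  exists (F : splittingFieldType rat) (emb : {rmorphism F -> algC}),
    forall y, y \in S -> exists z, emb z = y.
Proof.
pose pS := \prod_(y <- S) sval (minCpolyP y).
have pS_monic : pS \is monic.
  by apply: monic_prod => y _; case: (minCpolyP y) => ? [].
have map_pS : map_poly ratr pS = \prod_(y <- S) minCpoly y :> {poly algC}.
  by rewrite rmorph_prod; apply: eq_bigr => y _; case: (minCpolyP y) => ? [].
have [r Dr] := closed_field_poly_normal (map_poly ratr pS : {poly algC}).
rewrite lead_coef_map (monicP pS_monic) rmorph1 scale1r in Dr.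
have Sr y : y \in S -> y \in r.
  move=> Sy; rewrite -root_prod_XsubC -Dr map_pS.
  by rewrite (big_rem y Sy) /= rootM root_minCpoly.
have [F [emb [rF Dr_emb genF]]] := num_field_exists r.
have map_emb (p : {poly rat}) :
    map_poly emb (map_poly (in_alg F) p) = map_poly ratr p.
  rewrite -map_poly_comp; apply: eq_map_poly => a.
  by rewrite /= rmorphZ_num rmorph1 mulr1.
have splitF : splitting_field_axiom F.
  exists (map_poly (in_alg F) pS).
    by apply/polyOverP=> i; rewrite coef_map memvZ ?memv_line.
  exists rF => //.
  congr (_ %= _): (eqpxx (map_poly (in_alg F) pS)); apply/(map_poly_inj emb).
  rewrite map_emb Dr -Dr_emb big_map rmorph_prod /=; apply: eq_bigr => z _.
  by rewrite map_polyXsubC.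
pose FS : splittingFieldType rat :=
  HB.pack (FieldExt.sort F) (FieldExt_isSplittingField.Build _ F splitF).
exists FS, emb.
by move=> y /Sr; rewrite -Dr_emb => /mapP[z _ ->]; exists z.
Qed.

Lemma number_field_image_subfield (K : algC -> Prop) n (s : 'I_n -> algC)
    (F : fieldExtType rat) (emb : {rmorphism F -> algC}) (t : 'I_n -> F) :
  is_subfield K ->
  (forall x, K x <-> exists c : 'I_n -> rat, x = \sum_(i < n) ratr (c i) * s i) ->
  (forall i, emb (t i) = s i) ->
  exists K0 : {subfield F}, forall y, K y <-> exists2 z, z \in K0 & emb z = y.
Proof.
move=> [_ [K1 [_ [_ [KM _]]]]] Ks Dt.
pose T := [tuple t i | i < n]; pose V : {vspace F} := <<T>>%VS.
have KV y : K y -> exists2 z, z \in V & emb z = y.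
  move=> /Ks[c ->]; exists (\sum_(i < n) c i *: t i).
    apply: memv_suml => i _; apply/memvZ/memv_span.
    by rewrite -[t i](tnth_mktuple t) mem_tnth.
  by rewrite rmorph_sum; apply: eq_bigr => i _; rewrite rmorphZ_num Dt.
have VK z : z \in V -> K (emb z).
  move=> /coord_span ->; apply/Ks; exists (fun i => coord T i z).
  rewrite rmorph_sum; apply: eq_bigr => i _.
  by rewrite rmorphZ_num -tnth_nth tnth_mktuple Dt.
have V_mem_emb y z : z \in V -> emb y = emb z -> y \in V.
  by move=> Vz /fmorph_inj ->.
have V_aspace : is_aspace V.
  rewrite /is_aspace has_algid1; last first.
    have [z Vz Dz] := KV 1 K1.
    by apply: (V_mem_emb _ z) => //; rewrite rmorph1 Dz.
  apply/prodvP=> u v Vu Vv.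
  have [w Vw Dw] := KV _ (KM _ _ (VK _ Vu) (VK _ Vv)).
  by apply: (V_mem_emb _ w) => //; rewrite rmorphM Dw.
exists (ASpace V_aspace) => y; split; first exact: KV.
by case=> z Vz <-; apply: VK.
Qed.

Lemma number_field_aut_moves (K : algC -> Prop) x :
  number_field K -> ~ K x ->
  exists nu : {rmorphism algC -> algC}, (forall y, K y -> nu y = y) /\ nu x != x.
Proof.
move=> [subK [n [s Ks]]] Kx.
have [F [emb Femb]] := algC_splitting_field_containing (x :: codom s).
have [xx Dxx] := Femb x (mem_head _ _).
have /fin_all_exists[t Dt] : forall i, exists z, emb z = s i.
  by move=> i; apply: Femb; rewrite inE codom_f orbT.
have [K0 DK] := number_field_image_subfield subK Ks Dt.
have K0xx : xx \notin K0 by apply/negP => K0x; apply: Kx; apply/DK; exists xx.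
have [phi [phiK phix]] := splitting_field_aut_moves K0xx.
have [nu Dnu] := extend_algC_subfield_aut emb phi.
exists nu; split; first by move=> _ /DK[z K0z <-]; rewrite -Dnu phiK.
by rewrite -Dxx -Dnu (inj_eq (fmorph_inj emb)).
Qed.

Lemma number_field_fixed (K : algC -> Prop) x : number_field K ->
  (forall nu : {rmorphism algC -> algC}, (forall y, K y -> nu y = y) -> nu x = x) ->
  K x.
Proof.
move=> nfK fixx; apply: NNPP => Kx.
have [nu [nuK]] := number_field_aut_moves nfK Kx.
by rewrite fixx ?eqxx.
Qed.

Lemma iter_return (T : eqType) (f : T -> T) (s : seq T) x :
  injective f -> (forall i, iter i f x \in s) -> exists2 m, (0 < m)%N & iter m f x = x.
Proof.
move=> f_inj xs.
pose idx (i : 'I_(size s).+1) : 'I_(size s) := Ordinal (etrans (index_mem _ _) (xs i)).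
have /injectivePn[i [j neq_ij idx_ij]] : ~~ injectiveb idx.
  by apply/injectiveP => /leq_card; rewrite !card_ord ltnn.
have {idx_ij} : iter i f x = iter j f x.
  by have /(congr1 (nth x s)) := congr1 val idx_ij; rewrite !nth_index.
have iter_inj k : injective (iter k f) by elim: k => //= k IHk y z /f_inj/IHk.
wlog lt_ij : i j neq_ij / (i < j)%N.
  move=> ret; case: (ltngtP i j) => [|lt_ji|/val_inj eq_ij]; first exact: ret.
    by move/esym; apply: ret; rewrite // eq_sym.
  by rewrite eq_ij eqxx in neq_ij.
move=> eq_ij; exists (j - i)%N; first by rewrite subn_gt0.
by apply: (iter_inj i); rewrite -iterD subnKC ?(ltnW lt_ij).
Qed.

Lemma aut_iter_return (nu : {rmorphism algC -> algC}) y :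
  exists2 m, (0 < m)%N & iter m nu y = y.
Proof.
have [r Dr] := closed_field_poly_normal (minCpoly y).
rewrite (monicP (minCpoly_monic y)) scale1r in Dr.
apply: (@iter_return _ _ r _ (fmorph_inj nu)) => i.
rewrite -root_prod_XsubC -Dr.
suff <- : minCpoly (iter i nu y) = minCpoly y by apply: root_minCpoly.
by elim: i => //= i IHi; rewrite minCpoly_aut.
Qed.

Lemma aut_in_gal (K L : algC -> Prop) (nu : {rmorphism algC -> algC}) :
  galois_ext K L -> (forall y, K y -> nu y = y) -> in_gal K L nu.
Proof.
move=> [_ _ _ L_stable] nuK; have nuL := L_stable _ nuK.
have iter_nuL i x : L x -> L (iter i nu x) by elim: i => //= i IHi /IHi/nuL.
split=> //; split.
  move=> y Ly; have [m m_gt0 nu_my] := aut_iter_return nu y.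
  by exists (iter m.-1 nu y); [exact: iter_nuL | rewrite -iterS prednK].
by do 3?split=> [x1 x2 _ _|]; rewrite ?rmorphD ?rmorphM ?rmorph1.
Qed.

Lemma Zp_expr_gcd_totient q (k : 'Z_q) n :
  (1 < q)%N -> (0 < n)%N -> k ^+ n = 1 -> k ^+ gcdn (totient q) n = 1.
Proof.
move=> q_gt1 n_gt0 kn1.
have Uk : k \is a GRing.unit by apply/unitrPr; exists (k ^+ n.-1); rewrite -exprS prednK.
pose u := FinRing.unit 'Z_q Uk.
have un1 : (u ^+ n)%g = 1%g by apply: val_inj; rewrite val_unitX /= kn1.
have ut1 : (u ^+ totient q)%g = 1%g.
  by rewrite -card_units_Zp ?(ltnW q_gt1) //; apply: expg_cardG; rewrite inE.
have /eqP ug1 : (u ^+ gcdn (totient q) n == 1)%g.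
  by rewrite -order_dvdn dvdn_gcd !order_dvdn un1 ut1 !eqxx.
by have := congr1 val ug1; rewrite val_unitX.
Qed.

Lemma odd_prime_power_dvd_pred_succ p e m : prime p -> odd p ->
  (p ^ e %| m.-1 * m.+1)%N -> (p ^ e %| m.-1)%N || (p ^ e %| m.+1)%N.
Proof.
move=> p_pr p_odd dvd_q.
have p_gt2 := odd_prime_gt2 p_odd p_pr.
have [cop | p_succ] := boolP (coprime p m.+1).
  by apply/orP; left; rewrite -(Gauss_dvdl _ (coprimeXl e cop)).
suff cop : coprime p m.-1.
  by apply/orP; right; rewrite -(Gauss_dvdr _ (coprimeXl e cop)).
move: p_succ; rewrite !prime_coprime // negbK => p_succ.
apply/negP => /(dvdn_sub p_succ)/dvdn_leq; lia.
Qed.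

Lemma odd_prime_power_gt2 q : odd_prime_power q -> (2 < q)%N.
Proof.
case=> p [e [p_pr p_odd e_gt0 ->]].
have p_gt2 := odd_prime_gt2 p_odd p_pr.
by apply: leq_trans (leq_pexp2l (ltnW (ltnW p_gt2)) e_gt0); rewrite expn1.
Qed.

Lemma Zp_sqr_eq1 q (k : 'Z_q) : odd_prime_power q -> k ^+ 2 = 1 -> k = 1 \/ k = -1.
Proof.
move=> opp_q; have q_gt1 := ltnW (odd_prime_power_gt2 opp_q).
case: opp_q k => p [e [p_pr p_odd _ Dq]] k kk1.
pose m : nat := k.
have Dk : k = m%:R by rewrite natr_Zp.
have m_lt_q : (m < q)%N by rewrite -[X in (_ < X)%N](Zp_cast q_gt1) ltn_ord.
have mm1 : (m * m = 1 %[mod q])%N.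
  have /(congr1 (@nat_of_ord _)) : (m * m)%:R = 1%:R :> 'Z_q.
    by rewrite natrM -Dk -expr2.
  by rewrite !(val_Zp_nat q_gt1).
have m_gt0 : (0 < m)%N by case: (m) mm1 => //; rewrite mod0n modn_small.
have : (p ^ e %| m.-1 * m.+1)%N.
  have -> : (m.-1 * m.+1 = m * m - 1)%N by nia.
  by rewrite -Dq -eqn_mod_dvd ?mm1 ?modn_small //; nia.
move=> /(odd_prime_power_dvd_pred_succ p_pr p_odd)/orP[] /dvdn_leq.
  by left; rewrite Dk; have -> : m = 1%N by lia.
right; apply/eqP; rewrite -addr_eq0 Dk natr1.
have -> : m.+1 = q by lia.
by rewrite -val_eqE /= (val_Zp_nat q_gt1) modnn.
Qed.

Lemma ec_mul_None E n : ec_mul E n None = None.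
Proof. by elim: n => //= n; rewrite /ec_mul /= => ->. Qed.

Lemma tors_None E F q : tors E F q None.
Proof. by split=> //; apply: ec_mul_None. Qed.

Lemma tors_sub E (F1 F2 : algC -> Prop) q P :
  (forall x, F1 x -> F2 x) -> tors E F1 q P -> tors E F2 q P.
Proof.
move=> F12 [onP FP qP]; split=> //.
by case: P FP {onP qP} => [[x y] [Fx Fy]|] //; split; apply: F12.
Qed.

Definition pt_opp (P : point) : point :=
  if P is Some (x, y) then Some (x, - y) else None.

Definition pt_map (nu : algC -> algC) (P : point) : point :=
  if P is Some (x, y) then Some (nu x, nu y) else None.

Section GaloisActionOnPoints.

Variables (E : ecurve) (nu : {rmorphism algC -> algC}).
Hypotheses (nu_a : nu (ec_a E) = ec_a E) (nu_b : nu (ec_b E) = ec_b E).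

Lemma pt_map_add P Q : pt_map nu (ec_add E P Q) = ec_add E (pt_map nu P) (pt_map nu Q).
Proof.
case: P Q => [[x1 y1]|] [[x2 y2]|] //=.
rewrite (inj_eq (fmorph_inj nu)) -rmorphN (inj_eq (fmorph_inj nu)).
case: ifP => _; last by rewrite /= !(rmorphB, rmorphM, fmorphV, rmorphXn).
by case: ifP => //= _; rewrite !(rmorphB, rmorphM, fmorphV, rmorphXn, rmorphD, nu_a) ?rmorph1.
Qed.

Lemma pt_map_mul n P : pt_map nu (ec_mul E n P) = ec_mul E n (pt_map nu P).
Proof. by elim: n => //= n IHn; rewrite /ec_mul /= pt_map_add -!/(ec_mul _ _ _) IHn. Qed.

Lemma pt_map_on_curve P : on_curve E P -> on_curve E (pt_map nu P).
Proof.
by case: P => [[x y]|] //= onP; rewrite -rmorphXn onP !(rmorphD, rmorphM, rmorphXn) nu_a nu_b.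
Qed.

Lemma pt_map_tors (F : algC -> Prop) q P : (forall x, F x -> F (nu x)) ->
  tors E F q P -> tors E F q (pt_map nu P).
Proof.
move=> nuF [onP FP qP]; split; first exact: pt_map_on_curve.
  by case: P FP {onP qP} => [[x y] []|] //=; split; apply: nuF.
by rewrite -pt_map_mul qP.
Qed.

End GaloisActionOnPoints.

Lemma pt_over_fixed (K : algC -> Prop) P : number_field K ->
  (forall nu : {rmorphism algC -> algC}, (forall y, K y -> nu y = y) -> pt_map nu P = P) ->
  pt_over K P.
Proof.
move=> nfK fixP; case: P fixP => [[x y]|] //= fixP.
by split; apply: number_field_fixed => // nu /fixP[].
Qed.

Lemma tors_descends (K L : algC -> Prop) E q : number_field K -> (forall x, K x -> L x) ->
  (forall nu : {rmorphism algC -> algC}, (forall y, K y -> nu y = y) ->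
     forall P, tors E L q P -> pt_map nu P = P) ->
  forall P, tors E L q P <-> tors E K q P.
Proof.
move=> nfK KL fixL P; split; last exact: tors_sub.
move=> /[dup] torsP [onP _ qP]; split=> //.
by apply: pt_over_fixed => // nu nuK; apply: fixL.
Qed.

Definition twist_pt (c : algC) (P : point) : point :=
  if P is Some (x, y) then Some (c ^+ 2 * x, c ^+ 3 * y) else None.

Lemma pt_map_twist_pt (nu : {rmorphism algC -> algC}) c P :
  pt_map nu (twist_pt c P) = twist_pt (nu c) (pt_map nu P).
Proof. by case: P => [[x y]|] //=; rewrite !rmorphM; congr (Some (_, _)); ring. Qed.

Lemma twist_pt_opp c P : twist_pt (- c) (pt_opp P) = twist_pt c P.
Proof. by case: P => [[x y]|] //; rewrite /twist_pt /pt_opp; congr (Some (_, _)); ring. Qed.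

Section Twist.

Variables (E : ecurve) (c : algC).
Hypothesis c_neq0 : c != 0.

Let c2_neq0 : c ^+ 2 != 0. Proof. exact: expf_neq0. Qed.
Let c3_neq0 : c ^+ 3 != 0. Proof. exact: expf_neq0. Qed.

Lemma twist_pt_add P Q :
  twist_pt c (ec_add E P Q) = ec_add (twist E (c ^+ 2)) (twist_pt c P) (twist_pt c Q).
Proof.
case: P Q => [[x1 y1]|] [[x2 y2]|] //; case: E => a b.
rewrite /ec_add /twist_pt /twist /= (inj_eq (mulfI c2_neq0)) -mulrN (inj_eq (mulfI c3_neq0)).
case: ifP => x12; last first.
  have x21_neq0 : x2 - x1 != 0 by rewrite subr_eq0 eq_sym x12.
  set l := (y2 - y1) / (x2 - x1).
  have -> : (c ^+ 3 * y2 - c ^+ 3 * y1) / (c ^+ 2 * x2 - c ^+ 2 * x1) = c * l.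
    by rewrite /l; field; rewrite x21_neq0 -mulrBr mulf_neq0.
  by congr (Some (_, _)); ring.
case: ifP => // _; set l := (3 * x1 ^+ 2 + a) / (2 * y1).
have -> : (3 * (c ^+ 2 * x1) ^+ 2 + c ^+ 2 ^+ 2 * a) / (2 * (c ^+ 3 * y1)) = c * l.
  (* for y1 = 0 both slopes are the junk value x / 0 = 0 *)
  rewrite /l; have [->|y1_neq0] := eqVneq y1 0; first by rewrite !(mulr0, invr0).
  have two_neq0 : (2 : algC) != 0 by rewrite pnatr_eq0.
  by field; rewrite y1_neq0 c_neq0.
by congr (Some (_, _)); ring.
Qed.

Lemma twist_pt_mul n P : twist_pt c (ec_mul E n P) = ec_mul (twist E (c ^+ 2)) n (twist_pt c P).
Proof. by elim: n => //= n IHn; rewrite /ec_mul /= twist_pt_add -!/(ec_mul _ _ _) IHn. Qed.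

Lemma twist_pt_on_curve P : on_curve (twist E (c ^+ 2)) (twist_pt c P) <-> on_curve E P.
Proof.
case: P => [[x y]|] //; case: E => a b; rewrite /on_curve /twist_pt /twist /=.
have c6_neq0 : c ^+ 6 != 0 by rewrite expf_neq0.
have -> : (c ^+ 3 * y) ^+ 2 = c ^+ 6 * y ^+ 2 by ring.
have -> : (c ^+ 2 * x) ^+ 3 + c ^+ 2 ^+ 2 * a * (c ^+ 2 * x) + c ^+ 2 ^+ 3 * b =
    c ^+ 6 * (x ^+ 3 + a * x + b) by ring.
by split=> [/(mulfI c6_neq0)|->].
Qed.

Lemma twist_pt_inj : injective (twist_pt c).
Proof. by move=> [[x1 y1]|] [[x2 y2]|] //= [/(mulfI c2_neq0) -> /(mulfI c3_neq0) ->]. Qed.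

Lemma twist_pt_surj R : exists P, twist_pt c P = R.
Proof.
case: R => [[x y]|]; last by exists None.
by exists (Some (x / c ^+ 2, y / c ^+ 3)); rewrite /= ![c ^+ _ * _]mulrC !divfK.
Qed.

Lemma twist_pt_over (F : algC -> Prop) P : is_subfield F -> F c ->
  pt_over F (twist_pt c P) <-> pt_over F P.
Proof.
move=> [_ [F1 [_ [_ [FM FV]]]]] Fc.
have FX n : F (c ^+ n) by elim: n => [|n IHn]; rewrite ?expr0 // exprS; apply: FM.
case: P => [[x y]|] //=; split=> [[Fx Fy]|[Fx Fy]]; last by split; apply: FM.
by rewrite -(mulKf c2_neq0 x) -(mulKf c3_neq0 y); split; apply: FM => //; apply: FV.
Qed.

Lemma twist_pt_tors (F : algC -> Prop) q P : is_subfield F -> F c ->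
  tors (twist E (c ^+ 2)) F q (twist_pt c P) <-> tors E F q P.
Proof.
move=> subF Fc; rewrite /tors -twist_pt_mul.
have [onE onE'] := twist_pt_on_curve P; have [ovF ovF'] := twist_pt_over P subF Fc.
split=> -[onP FP qP]; split; auto; last by rewrite qP.
by apply: twist_pt_inj; rewrite qP.
Qed.

Lemma twist_group_iso (F : algC -> Prop) q : is_subfield F -> F c ->
  group_iso E (tors E F q) (twist E (c ^+ 2)) (tors (twist E (c ^+ 2)) F q).
Proof.
move=> subF Fc; exists (twist_pt c); split.
- by move=> P /(twist_pt_tors q P subF Fc).
- by move=> P Q _ _ /twist_pt_inj.
- move=> R torsR; have [P DR] := twist_pt_surj R.
  by exists P; rewrite // -(twist_pt_tors q P subF Fc) DR.
- by move=> P Q _ _; apply: twist_pt_add.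
Qed.

End Twist.

Lemma iter_pt_map (nu : algC -> algC) m P :
  iter m (pt_map nu) P = pt_map (iter m nu) P.
Proof. by case: P => [[x y]|]; elim: m => //= m ->. Qed.

Section CyclicTorsion.

Variables (K L : algC -> Prop) (E : ecurve) (q : nat) (f : 'Z_q -> point).
Hypotheses (f_inj : injective f) (f_onto : forall P, tors E L q P <-> exists i, f i = P).
Hypothesis fD : forall i j, f (i + j) = ec_add E (f i) (f j).

Lemma tors_f i : tors E L q (f i).
Proof. by apply/f_onto; exists i. Qed.

Lemma f0 : f 0 = None.
Proof. by have [i fi] := (f_onto None).1 (tors_None E L q); have := fD i 0; rewrite addr0 fi. Qed.

Lemma fN i : f (- i) = pt_opp (f i).
Proof.
have := fD (- i) i; rewrite addNr f0.
case: (f i) => [[x y]|]; case: (f (- i)) => [[x' y']|] //=.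
by case: ifP => [/eqP -> | //]; case: ifP => [/eqP -> | //].
Qed.

Lemma f1_y_neq0 : (2 < q)%N -> exists x y, f 1 = Some (x, y) /\ y != 0.
Proof.
move=> q_gt2; case f1: (f 1) => [[x y]|]; last first.
  by move: f1; rewrite -f0 => /f_inj/eqP; rewrite oner_eq0.
exists x, y; split=> //; apply/eqP => y0.
have := fD 1 1; rewrite f1 y0 /= eqxx oppr0 eqxx -f0 => /f_inj.
move/(congr1 (@nat_of_ord _)); rewrite -[1 + 1]/(2%:R : 'Z_q).
by rewrite (val_Zp_nat (ltnW q_gt2)) modn_small.
Qed.

Hypotheses (galKL : galois_ext K L) (Ka : K (ec_a E)) (Kb : K (ec_b E)).

Lemma aut_acts_by_scalar (nu : {rmorphism algC -> algC}) :
  (forall y, K y -> nu y = y) -> exists k, forall i, pt_map nu (f i) = f (k * i).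
Proof.
move=> nuK; have [nu_a nu_b] := (nuK _ Ka, nuK _ Kb).
have [_ _ _ /(_ nu nuK) nuL] := galKL.
have [k fk] := (f_onto (pt_map nu (f 1))).1 (pt_map_tors nu_a nu_b nuL (tors_f 1)).
exists k => i; rewrite -(natr_Zp i).
elim: (nat_of_ord i) => [|n IHn]; first by rewrite mulr0 f0.
by rewrite -natr1 mulrDr mulr1 !fD pt_map_add // IHn fk.
Qed.

Lemma scalar_expr_order (nu : {rmorphism algC -> algC}) n k :
  (forall i, pt_map nu (f i) = f (k * i)) -> gal_order L nu n -> k ^+ n = 1.
Proof.
move=> fk [_ nu_n _].
have iter_fk m i : iter m (pt_map nu) (f i) = f (k ^+ m * i).
  by elim: m => [|m IHm] /=; rewrite ?expr0 ?mul1r // IHm fk mulrA -exprS.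
apply: f_inj; rewrite -[k ^+ n]mulr1 -iter_fk iter_pt_map.
by have [_ Lf1 _] := tors_f 1; case: (f 1) Lf1 => [[x y] [Lx Ly]|] //=; rewrite !nu_n.
Qed.

Hypotheses (q_opp : odd_prime_power q)
  (ord_fin : forall sigma, in_gal K L sigma -> exists n, gal_order L sigma n).

Lemma aut_acts_by_root_of_unity (nu : {rmorphism algC -> algC}) :
  (forall y, K y -> nu y = y) -> exists n k,
    [/\ gal_order L nu n, k ^+ gcdn (totient q) n = 1 &
        forall i, pt_map nu (f i) = f (k * i)].
Proof.
move=> nuK; have [n nu_n] := ord_fin (aut_in_gal galKL nuK).
have [k fk] := aut_acts_by_scalar nuK; exists n, k; split=> //.
apply: Zp_expr_gcd_totient; first exact: ltnW (odd_prime_power_gt2 q_opp).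
  by case: nu_n.
exact: scalar_expr_order nu_n.
Qed.

Lemma aut_fixes_tors :
  (forall sigma n, in_gal K L sigma -> gal_order L sigma n -> gcdn (totient q) n = 1%N) ->
  forall nu : {rmorphism algC -> algC}, (forall y, K y -> nu y = y) ->
  forall P, tors E L q P -> pt_map nu P = P.
Proof.
move=> gcd1 nu nuK _ /f_onto[i <-].
have [n [k [nu_n]]] := aut_acts_by_root_of_unity nuK.
by rewrite (gcd1 _ _ (aut_in_gal galKL nuK) nu_n) expr1 => -> ->; rewrite mul1r.
Qed.

Lemma aut_fixes_or_negates_tors :
  (forall sigma n, in_gal K L sigma -> gal_order L sigma n -> (gcdn (totient q) n <= 2)%N) ->
  forall nu : {rmorphism algC -> algC}, (forall y, K y -> nu y = y) ->
  (forall i, pt_map nu (f i) = f i) \/ (forall i, pt_map nu (f i) = pt_opp (f i)).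
Proof.
move=> gcd2 nu nuK; have [n [k [nu_n k_gcd fk]]] := aut_acts_by_root_of_unity nuK.
have k2 : k ^+ 2 = 1.
  have g_le2 := gcd2 _ _ (aut_in_gal galKL nuK) nu_n.
  have g_gt0 : (0 < gcdn (totient q) n)%N.
    by rewrite gcdn_gt0 totient_gt0 (ltnW (ltnW (odd_prime_power_gt2 q_opp))).
  have [g1|g2] : gcdn (totient q) n = 1%N \/ gcdn (totient q) n = 2%N by lia.
    by rewrite g1 expr1 in k_gcd; rewrite k_gcd expr1n.
  by rewrite -g2.
by case: (Zp_sqr_eq1 q_opp k2) => Dk; [left | right] => i; rewrite fk Dk ?mul1r ?mulN1r ?fN.
Qed.

Lemma aut_fixes_twist x c :
  (forall sigma n, in_gal K L sigma -> gal_order L sigma n -> (gcdn (totient q) n <= 2)%N) ->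
  f 1 = Some (x, c) ->
  forall nu : {rmorphism algC -> algC}, (forall y, K y -> nu y = y) ->
  nu (c ^+ 2) = c ^+ 2 /\ forall i, pt_map nu (twist_pt c (f i)) = twist_pt c (f i).
Proof.
move=> gcd2 f1 nu nuK.
case: (aut_fixes_or_negates_tors gcd2 nuK) => act; have := act 1; rewrite f1 => -[_ nu_c].
  by split=> [|i]; rewrite ?rmorphXn ?pt_map_twist_pt nu_c ?act.
by split=> [|i]; rewrite ?rmorphXn ?pt_map_twist_pt nu_c ?sqrrN ?act ?twist_pt_opp.
Qed.

End CyclicTorsion.

Theorem lemma4p1 (K L : algC -> Prop) (E : ecurve) (q : nat) :
  number_field K -> galois_ext K L ->
  (forall sigma, in_gal K L sigma -> exists n, gal_order L sigma n) ->
  elliptic_over K E ->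
  odd_prime_power q ->
  iso_Zq E (tors E L q) q ->
  ((forall sigma n, in_gal K L sigma -> gal_order L sigma n ->
       gcdn (totient q) n = 1%N) ->
     forall P, tors E L q P <-> tors E K q P)
  /\
  ((forall sigma n, in_gal K L sigma -> gal_order L sigma n ->
       (gcdn (totient q) n <= 2)%N) ->
     exists d : algC,
       [/\ K d, d != 0, (exists2 r, L r & r ^+ 2 = d),
           group_iso E (tors E L q) (twist E d) (tors (twist E d) L q) &
           forall P, tors (twist E d) L q P <-> tors (twist E d) K q P]).
Proof.
move=> nfK galKL ord_fin [Ka Kb _] q_opp [f [f_inj f_onto fD]].
have [_ subL KL _] := galKL.
split=> [gcd1 | gcd2].
  apply: tors_descends => // nu nuK.
  exact: (aut_fixes_tors f_inj f_onto fD galKL Ka Kb q_opp ord_fin gcd1 nuK).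
have [x [c [f1 c_neq0]]] := f1_y_neq0 f_inj f_onto fD (odd_prime_power_gt2 q_opp).
have Lc : L c by have [_ + _] := tors_f f_onto 1; rewrite f1 => -[].
have fix_twist := aut_fixes_twist f_inj f_onto fD galKL Ka Kb q_opp ord_fin gcd2 f1.
exists (c ^+ 2); split.
- by apply: number_field_fixed => // nu /fix_twist[].
- by rewrite expf_neq0.
- by exists c.
- exact: twist_group_iso.
apply: tors_descends => // nu /fix_twist[_ fix_nu] R.
have [P <-] := twist_pt_surj c_neq0 R.
by move/(twist_pt_tors E c_neq0 q P subL Lc)/f_onto => [i <-].
Qed.
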